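(* Let $K\subseteq\mathbb{R}^d$ be a convex body with $\mathrm{width}(K)>0$. Then $\lambda_d(K-K)\le\frac{\mathrm{Flt}(d)}{\mathrm{width}(K)}$.
   Context: A convex body is a non-empty compact convex subset of $\mathbb{R}^d$; $\mathrm{width}(K)=\min_{u\in(\mathbb{Z}^d)^*\setminus\{0\}}\max_{x,y\in K}|u(x)-u(y)|$; $\mathrm{Flt}(d)=\sup\{\mathrm{width}(K): K\text{ convex body}, K\cap\mathbb{Z}^d=\emptyset\}$. The difference body is $K-K=\{x-y:x,y\in K\}$, and its $d$-th successive minimum is $\lambda_d(K-K)=\inf\{\lambda>0:\dim\mathrm{span}(\lambda(K-K)\cap\mathbb{Z}^d)=d\}$. *)

From mathcomp Require Import ssreflect ssrfun ssrbool eqtype ssrnat fintype bigop.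
From Stdlib Require Import Reals ZArith.

Set Implicit Arguments.
Unset Strict Implicit.

Local Open Scope R_scope.

Definition Rd (d : nat) := 'I_d -> R.

Definition dotR (d : nat) (u x : Rd d) : R := \big[Rplus/0]_(i < d) (u i * x i).

Definition is_lattice_point (d : nat) (x : Rd d) : Prop :=
  forall i : 'I_d, exists z : Z, x i = IZR z.

Definition IZRv (d : nat) (u : 'I_d -> Z) : Rd d := fun i => IZR (u i).

Definition convex (d : nat) (K : Rd d -> Prop) : Prop :=
  forall x y t, K x -> K y -> 0 <= t <= 1 -> K (fun i => t * x i + (1 - t) * y i).

Definition closed_set (d : nat) (K : Rd d -> Prop) : Prop :=
  forall x : Rd d,
    (forall eps, 0 < eps -> exists y, K y /\ forall i, Rabs (x i - y i) < eps) -> K x.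

Definition bounded_set (d : nat) (K : Rd d -> Prop) : Prop :=
  exists M, forall x, K x -> forall i, Rabs (x i) <= M.

Definition convex_body (d : nat) (K : Rd d -> Prop) : Prop :=
  (exists x, K x) /\ convex K /\ closed_set K /\ bounded_set K.

Definition lattice_free (d : nat) (K : Rd d -> Prop) : Prop :=
  forall x, K x -> ~ is_lattice_point x.

Definition is_glb (E : R -> Prop) (m : R) : Prop :=
  (forall t, E t -> m <= t) /\ (forall m', (forall t, E t -> m' <= t) -> m' <= m).

(* w = max_{x,y in K} |u(x) - u(y)|  (the max exists by compactness, so it equals the sup) *)
Definition is_dir_width (d : nat) (K : Rd d -> Prop) (u : 'I_d -> Z) (w : R) : Prop :=
  is_lub (fun r => exists x y, K x /\ K y /\ r = Rabs (dotR (IZRv u) x - dotR (IZRv u) y)) w.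

Definition nonzero_int_vec (d : nat) (u : 'I_d -> Z) : Prop :=
  exists i, u i <> 0%Z.

Definition is_width (d : nat) (K : Rd d -> Prop) (w : R) : Prop :=
  (exists u, nonzero_int_vec u /\ is_dir_width K u w) /\
  (forall u v, nonzero_int_vec u -> is_dir_width K u v -> w <= v).

Definition is_Flt (d : nat) (F : R) : Prop :=
  is_lub (fun r => exists K : Rd d -> Prop,
            convex_body K /\ lattice_free K /\ is_width K r) F.

Definition in_scaled_diff (d : nat) (t : R) (K : Rd d -> Prop) (z : Rd d) : Prop :=
  exists x y, K x /\ K y /\ forall i, z i = t * (x i - y i).

Definition lin_indep (d : nat) (v : 'I_d -> Rd d) : Prop :=
  forall c : 'I_d -> R,
    (forall j : 'I_d, \big[Rplus/0]_(i < d) (c i * v i j) = 0) -> forall i, c i = 0.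

Definition full_lattice_span (d : nat) (t : R) (K : Rd d -> Prop) : Prop :=
  exists v : 'I_d -> Rd d,
    (forall i, in_scaled_diff t K (v i) /\ is_lattice_point (v i)) /\ lin_indep v.

Definition is_lambda_d (d : nat) (K : Rd d -> Prop) (l : R) : Prop :=
  is_glb (fun t => 0 < t /\ full_lattice_span t K) l.

(* Suppose lambda_d(K - K) > Flt(d) / width(K) and pick t < t' strictly between them.
   Since width(c + tK) = t width(K) > Flt(d), every translate c + tK meets Z^d.
   Since t'(K - K) spans no full-rank lattice, some u <> 0 vanishes on its lattice points.
   For x, y in K choose lattice points p_n in n (t' - t)(x - y) + tK: by convexity
   p_(n+1) - p_n lies in (t' - t)(K - K) + t(K - K) = t'(K - K), so u(p_n) is constant,
   while u(p_n) = n (t' - t) u(x - y) + O(1); hence u is constant on K.  But then u takes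
   every real value on lattice points of the translates c + tK, although Z^d is countable. *)

From Pilot Require Import Defs.
From Stdlib Require Import Reals ZArith Lra Classical ClassicalEpsilon FunctionalExtensionality.
From mathcomp Require Import all_boot all_order all_algebra.
From mathcomp Require Import Rstruct ssrZ.
Import Order.TTheory GRing.Theory Num.Theory.
Set Implicit Arguments.
Unset Strict Implicit.
Unset Printing Implicit Defensive.

Local Open Scope R_scope.

Lemma dotR_lin d (u x y : Rd d) (a b : R) :
  dotR u (fun i => a * x i + b * y i) = a * dotR u x + b * dotR u y.
Proof.
rewrite /dotR; change (\sum_(i < d) (u i * (a * x i + b * y i)) =
  a * \sum_(i < d) (u i * x i) + b * \sum_(i < d) (u i * y i))%R.
rewrite !GRing.mulr_sumr -big_split; apply: eq_bigr => i _ /=.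
rewrite -!RmultE -!RplusE; ring.
Qed.

Lemma dotR_ext d (u x y : Rd d) : (forall i, x i = y i) -> dotR u x = dotR u y.
Proof. by move=> xy; apply: eq_bigr => i _; rewrite xy. Qed.

Lemma dotR_affine d (u c y z : Rd d) (t : R) :
  (forall i, z i = c i + t * y i) -> dotR u z = dotR u c + t * dotR u y.
Proof.
move=> zE; rewrite (@dotR_ext d u z (fun i => 1 * c i + t * y i)) ?dotR_lin => [|i].
  by ring.
by rewrite zE; ring.
Qed.

Lemma dotR_sub d (u x y : Rd d) : dotR u (fun i => x i - y i) = dotR u x - dotR u y.
Proof. by rewrite (@dotR_affine d u x y _ (-1)) => [|i]; ring. Qed.

Lemma dotR_delta d (u : Rd d) (j : 'I_d) (s : R) :
  dotR u (fun i => if i == j then s else 0) = u j * s.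
Proof.
rewrite /dotR (bigD1 j) //= eqxx big1 => [|i /negbTE ->]; last by rewrite Rmult_0_r.
by rewrite Rplus_0_r.
Qed.

Lemma dotR_scale d (u x : Rd d) (a : R) : dotR u (fun i => a * x i) = a * dotR u x.
Proof.
rewrite (@dotR_ext d u _ (fun i => a * x i + 0 * x i)) ?dotR_lin => [|i]; ring.
Qed.

Lemma dotR_bounded d (u : Rd d) (K : Rd d -> Prop) :
  bounded_set K -> exists B, forall y, K y -> Rabs (dotR u y) <= B.
Proof.
case=> M KM; exists (\sum_(i < d) `|u i| * M)%R => y Ky; apply/RleP.
rewrite -[Rabs _]/(`|dotR u y|%R).
apply: le_trans (ler_norm_sum _ _ _) _; apply: ler_sum => i _.
by rewrite normrM ler_wpM2l //; apply/RleP; exact: KM.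
Qed.

Lemma coord_bounded d (c : Rd d) : exists M, forall i, Rabs (c i) <= M.
Proof.
exists (\sum_(i < d) `|c i|)%R => i; apply/RleP.
by rewrite -[Rabs _]/(`|c i|%R) (bigD1 i) //= lerDl sumr_ge0.
Qed.

Section LinearAlgebra.
Local Open Scope ring_scope.

Lemma row_free_col_mx_row m n (M : 'M[R]_(m, n)) (v : 'rV_n) :
  row_free M -> ~~ (v <= M)%MS -> row_free (col_mx v M).
Proof.
move=> freeM vNM; have sMMv : (M <= col_mx v M)%MS by rewrite -addsmxE addsmxSr.
have := ltn_leqif (mxrank_leqif_sup sMMv).
rewrite col_mx_sub submx_refl andbT (negbTE vNM) => ltM.
rewrite /row_free eqn_leq rank_leq_row /=; apply: leq_trans ltM.
by rewrite (eqP freeM) add1n.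
Qed.

Lemma exists_kernel_vector r n (M : 'M[R]_(r, n)) :
  (r < n)%N -> exists u : 'rV_n, u != 0 /\ M *m u^T = 0.
Proof.
move=> ltrn; have : kermx M^T != 0.
  rewrite kermx_eq0 -row_leq_rank -ltnNge.
  by apply: leq_ltn_trans ltrn; rewrite mxrank_tr rank_leq_row.
case/rowV0Pn => u /submxP [D ->] Dnz; exists (D *m kermx M^T); split => //.
by rewrite -[M *m _]trmxK trmx_mul trmxK -mulmxA mulmx_ker mulmx0 trmx0.
Qed.

Lemma row_free_lin_indep d (M : 'M[R]_d) : row_free M -> lin_indep (fun i j => M i j).
Proof.
move=> freeM c Hc i.
have : (\row_k c k) *m M = 0.
  by apply/rowP => j; rewrite !mxE -[RHS](Hc j); apply: eq_bigr => k _; rewrite mxE.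
by move/eqP; rewrite mulmx_free_eq0 // => /eqP/rowP/(_ i); rewrite !mxE.
Qed.

Lemma dotR_mx d (u s : Rd d) : dotR u s = ((\row_j s j) *m (\row_j u j)^T) 0 0.
Proof. by rewrite !mxE; apply: eq_bigr => i _; rewrite !mxE mulrC. Qed.

Lemma row_free_or_annihilator d (S : Rd d -> Prop) r : (r <= d)%N ->
  (exists M : 'M[R]_(r, d), (forall i, S (fun j => M i j)) /\ row_free M) \/
  (exists u : Rd d, (exists j, u j <> 0) /\ forall s, S s -> dotR u s = 0).
Proof.
elim: r => [|r IH] ltrd.
  by left; exists 0; split; [case | rewrite /row_free mxrank0].
case: (IH (ltnW ltrd)) => [[M [SM freeM]]|]; last by right.
case: (classic (exists s, S s /\ ~~ ((\row_j s j) <= M)%MS)) => [[s [Ss sNM]]|inM].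
  left; exists (col_mx (\row_j s j) M); split; last exact: row_free_col_mx_row.
  (* the block lemmas need the row index type 'I_(1 + r), not 'I_r.+1 *)
  move=> i; pose A : 'M_(1 + r, d) := col_mx (\row_j s j) M; change (S (A i)).
  rewrite -(splitK (i : 'I_(1 + r))); case: (split _) => k.
    by apply: (eq_ind _ _ Ss); apply: functional_extensionality => j; rewrite col_mxEu mxE.
  by apply: (eq_ind _ _ (SM k)); apply: functional_extensionality => j; rewrite col_mxEd.
right; have [u [unz Mu]] := exists_kernel_vector M ltrd.
have [j uj] : exists j, u 0 j != 0.
  apply: NNPP => Hn; move/negP: unz; apply; apply/eqP/rowP => j; rewrite mxE.
  by apply/eqP/negPn/negP => uj; apply: Hn; exists j.
exists (fun j => u 0 j); split; first by exists j; apply/eqP.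
move=> s Ss; rewrite dotR_mx; have /submxP [D ->] : ((\row_j s j) <= M)%MS.
  by apply/negPn/negP => sNM; apply: inM; exists s.
rewrite (_ : \row_j u 0 j = u); last by apply/rowP => k; rewrite mxE.
by rewrite -mulmxA Mu mulmx0 mxE.
Qed.

Lemma exists_annihilator d (S : Rd d -> Prop) :
  ~ (exists v : 'I_d -> Rd d, (forall i, S (v i)) /\ lin_indep v) ->
  exists u : Rd d, (exists j, u j <> 0) /\ forall s, S s -> dotR u s = 0.
Proof.
move=> noBasis; case: (row_free_or_annihilator S (leqnn d)) => // [[M [SM freeM]]].
by case: noBasis; exists (fun i j => M i j); split => //; exact: row_free_lin_indep.
Qed.
End LinearAlgebra.

Lemma is_lub_scale (E E' : R -> Prop) (t v : R) : 0 < t ->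
  (forall r, E' r <-> exists r0, E r0 /\ r = t * r0) ->
  is_lub E v <-> is_lub E' (t * v).
Proof.
move=> t_gt0 E'E; split=> [[ubv lubv] | [ubtv lubtv]]; split.
- move=> r /E'E [r0 [Er0 ->]]; apply: Rmult_le_compat_l; [lra | exact: ubv].
- move=> b ubb; have tbE : t * (b / t) = b by field; lra.
  rewrite -tbE; apply: Rmult_le_compat_l; first lra.
  apply: lubv => r0 Er0; apply: (Rmult_le_reg_l t) => //; rewrite tbE.
  by apply: ubb; apply/E'E; exists r0.
- move=> r0 Er0; apply: (Rmult_le_reg_l t) => //; apply: ubtv; apply/E'E; by exists r0.
- move=> b ubb; apply: (Rmult_le_reg_l t) => //; apply: lubtv => r /E'E [r0 [Er0 ->]].
  apply: Rmult_le_compat_l; [lra | exact: ubb].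
Qed.

Definition homothety d (c : Rd d) (t : R) (K : Rd d -> Prop) : Rd d -> Prop :=
  fun z => exists y, K y /\ forall i, z i = c i + t * y i.

(* [Defs.] disambiguates from [Rtopology.closed_set], exported by [Reals]. *)
Lemma closed_set_homothety d (K : Rd d -> Prop) (c : Rd d) (t : R) :
  0 < t -> Defs.closed_set K -> Defs.closed_set (homothety c t K).
Proof.
move=> t_gt0 Kcl z zcl; exists (fun i => (z i - c i) / t); split=> [|i]; last by field; lra.
apply: Kcl => eps eps_gt0.
have [w [[y [Ky yE]] zw]] : exists w, homothety c t K w /\ forall i, Rabs (z i - w i) < eps * t.
  by apply: zcl; nra.
exists y; split=> // i; apply: (Rmult_lt_reg_r t) => //.
have -> : ((z i - c i) / t - y i) = (z i - (c i + t * y i)) / t by field; lra.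
have := zw i; rewrite -yE /Rdiv Rabs_mult Rabs_inv (Rabs_pos_eq t (Rlt_le _ _ t_gt0)).
by rewrite Rmult_assoc Rinv_l ?Rmult_1_r //; exact: Rgt_not_eq.
Qed.

Lemma convex_body_homothety d (K : Rd d -> Prop) (c : Rd d) (t : R) :
  0 < t -> convex_body K -> convex_body (homothety c t K).
Proof.
move=> t_gt0 [[x0 Kx0] [Kconv [Kcl [M KM]]]]; split; [|split; [|split]].
- by exists (fun i => c i + t * x0 i), x0.
- move=> x y s [x1 [Kx1 xE]] [y1 [Ky1 yE]] s01.
  exists (fun i => s * x1 i + (1 - s) * y1 i); split=> [|i]; first exact: Kconv.
  by rewrite xE yE; ring.
- exact: closed_set_homothety.
- have [Mc cMc] := coord_bounded c; exists (Mc + t * M) => z [y [Ky zE]] i; rewrite zE.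
  apply: Rle_trans (Rabs_triang _ _) _; rewrite Rabs_mult (Rabs_pos_eq t); last by lra.
  by have := cMc i; have := KM y Ky i; nra.
Qed.

Lemma is_dir_width_homothety d (K : Rd d -> Prop) (c : Rd d) (t : R) u v : 0 < t ->
  is_dir_width K u v <-> is_dir_width (homothety c t K) u (t * v).
Proof.
move=> t_gt0; apply: is_lub_scale => // r.
have diffE x y x0 y0 : (forall i, x i = c i + t * x0 i) -> (forall i, y i = c i + t * y0 i) ->
    Rabs (dotR (IZRv u) x - dotR (IZRv u) y) =
    t * Rabs (dotR (IZRv u) x0 - dotR (IZRv u) y0).
  move=> xE yE; rewrite (dotR_affine _ xE) (dotR_affine _ yE).
  set C := dotR _ c; set X := dotR _ x0; set Y := dotR _ y0.
  rewrite (_ : C + t * X - (C + t * Y) = t * (X - Y)); last by ring.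
  by rewrite Rabs_mult (Rabs_pos_eq t) //; lra.
split=> [[x [y [[x0 [Kx0 xE]] [[y0 [Ky0 yE]] ->]]]] | [r0 [[x0 [y0 [Kx0 [Ky0 ->]]]] ->]]].
  exists (Rabs (dotR (IZRv u) x0 - dotR (IZRv u) y0)).
  by split; [exists x0, y0 | exact: diffE].
exists (fun i => c i + t * x0 i), (fun i => c i + t * y0 i).
split; first by exists x0; split.
split; first by exists y0; split.
by symmetry; apply: diffE.
Qed.

Lemma is_width_homothety d (K : Rd d -> Prop) (c : Rd d) (t w : R) :
  0 < t -> is_width K w -> is_width (homothety c t K) (t * w).
Proof.
move=> t_gt0 [[u [u_nz Kuw]] wmin]; split.
  by exists u; split=> //; apply/(is_dir_width_homothety K c u w t_gt0).
move=> u' v u'_nz; have -> : v = t * (v / t) by field; lra.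
move/(is_dir_width_homothety K c u' (v / t) t_gt0) /(wmin _ _ u'_nz).
by apply: Rmult_le_compat_l; lra.
Qed.

Lemma is_dir_width_ge0 d (K : Rd d -> Prop) u w :
  (exists x, K x) -> is_dir_width K u w -> 0 <= w.
Proof.
move=> [x Kx] [ubw _]; apply: ubw; exists x, x; do 2!split=> //.
by rewrite Rminus_diag Rabs_R0.
Qed.

Lemma is_Flt_ge0 d F : is_Flt d F -> 0 <= F.
Proof.
move=> [ubF lubF].
case: (classic (exists r (K : Rd d -> Prop), convex_body K /\ lattice_free K /\ is_width K r)).
  move=> [r [K KrF]]; apply: Rle_trans (ubF r _); last by exists K.
  by case: KrF => [[Kne _] [_ [[u [_ Kur]] _]]]; exact: is_dir_width_ge0 Kur.
(* otherwise the set of widths is empty, and the empty set has no least upper bound *)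
move=> noBody; have : F <= F - 1 by apply: lubF => r Er; case: noBody; exists r.
lra.
Qed.

Definition lattice_covering d (t : R) (K : Rd d -> Prop) : Prop :=
  forall c : Rd d, exists p, is_lattice_point p /\ homothety c t K p.

Lemma lattice_covering_of_width d (K : Rd d -> Prop) (w F t : R) :
  convex_body K -> is_width K w -> is_Flt d F -> 0 < t -> F < t * w ->
  lattice_covering t K.
Proof.
move=> Kbody Kw [ubF _] t_gt0 Ftw c; apply: NNPP => noPoint.
suff : t * w <= F by lra.
apply: ubF; exists (homothety c t K); split; first exact: convex_body_homothety.
split; last exact: is_width_homothety.
by move=> x Kx xZ; apply: noPoint; exists x.
Qed.

Lemma in_scaled_diff_add d (K : Rd d -> Prop) (s t : R) (x1 y1 x2 y2 z : Rd d) :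
  convex K -> 0 <= s -> 0 <= t -> 0 < s + t ->
  K x1 -> K y1 -> K x2 -> K y2 ->
  (forall i, z i = s * (x1 i - y1 i) + t * (x2 i - y2 i)) ->
  in_scaled_diff (s + t) K z.
Proof.
move=> Kconv s_ge0 t_ge0 st_gt0 Kx1 Ky1 Kx2 Ky2 zE.
pose l := s / (s + t); have lE : l * (s + t) = s by rewrite /l; field; lra.
have l01 : 0 <= l <= 1 by split; nra.
exists (fun i => l * x1 i + (1 - l) * x2 i), (fun i => l * y1 i + (1 - l) * y2 i).
do 2!(split; first exact: Kconv).
by move=> i; rewrite zE /l; field; lra.
Qed.

Lemma is_lattice_point_sub d (p q : Rd d) :
  is_lattice_point p -> is_lattice_point q -> is_lattice_point (fun i => p i - q i).
Proof.
by move=> pZ qZ i; have [a ->] := pZ i; have [b ->] := qZ i; exists (Z.sub a b); rewrite minus_IZR.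
Qed.

Lemma bounded_multiples_eq0 (a B : R) : (forall n : nat, Rabs (INR n * a) <= B) -> a = 0.
Proof.
move=> bounded; apply: NNPP => a_nz; have a_pos : 0 < Rabs a by apply: Rabs_pos_lt.
have [n Bn] := INR_unbounded (B / Rabs a).
have := bounded n; rewrite Rabs_mult (Rabs_pos_eq _ (pos_INR n)).
have : B / Rabs a * Rabs a < INR n * Rabs a by apply: Rmult_lt_compat_r.
by rewrite /Rdiv Rmult_assoc Rinv_l ?Rmult_1_r; lra.
Qed.

Lemma constant_on_body_of_annihilator d (K : Rd d -> Prop) (t t' : R) (u : Rd d) :
  convex_body K -> 0 < t -> t < t' -> lattice_covering t K ->
  (forall z, in_scaled_diff t' K z -> is_lattice_point z -> dotR u z = 0) ->
  forall x y, K x -> K y -> dotR u x = dotR u y.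
Proof.
move=> [_ [Kconv [_ Kbd]]] t_gt0 tt' cover ann x1 y1 Kx1 Ky1.
pose v i := (t' - t) * (x1 i - y1 i).
have [p pP] := choice _ (fun n : nat => cover (fun i => INR n * v i)).
have step n : dotR u (p n.+1) = dotR u (p n).
  have [pZ [y [Ky pE]]] := pP n; have [pZ' [y' [Ky' pE']]] := pP n.+1.
  apply: Rminus_diag_uniq; rewrite -dotR_sub; apply: ann; last exact: is_lattice_point_sub.
  have -> : t' = (t' - t) + t by ring.
  apply: (in_scaled_diff_add Kconv _ _ _ Kx1 Ky1 Ky' Ky) => [||| i]; try lra.
  by rewrite pE pE' /v S_INR; ring.
have [B KB] := dotR_bounded u Kbd.
suff : (t' - t) * (dotR u x1 - dotR u y1) = 0 by move/Rmult_integral => [|]; lra.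
apply: (bounded_multiples_eq0 (B := 2 * t * B)) => n.
have [_ [y [Ky pE]]] := pP n; have [_ [y0 [Ky0 p0E]]] := pP 0%N.
have : dotR u (p n) = dotR u (p 0%N) by elim: n {pE} => // n IH; rewrite step.
rewrite (dotR_affine _ pE) (dotR_affine _ p0E) !dotR_scale Rmult_0_l Rplus_0_l dotR_sub => nE.
have -> : INR n * ((t' - t) * (dotR u x1 - dotR u y1)) = t * (dotR u y0 - dotR u y) by lra.
rewrite Rabs_mult (Rabs_pos_eq t); last by lra.
have := KB y Ky; have := KB y0 Ky0; have := Rabs_triang (dotR u y0) (- dotR u y).
by rewrite Rabs_Ropp /Rminus; nra.
Qed.

(* Cantor's nested intervals: the (n+1)-st interval is a closed third of the n-th one
   avoiding [f n], so the supremum of the left endpoints is not a value of [f]. *)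
Definition avoid_third (x : R) (ab : R * R) : R * R :=
  let (a, b) := ab in
  if Rlt_dec x (a + 2 * (b - a) / 3) then (a + 2 * (b - a) / 3, b) else (a, a + (b - a) / 3).

Fixpoint avoiding_intervals (f : nat -> R) (n : nat) : R * R :=
  if n is m.+1 then avoid_third (f m) (avoiding_intervals f m) else (0, 1).

Lemma avoid_third_spec x a b : a < b ->
  let I := avoid_third x (a, b) in a <= I.1 /\ I.1 < I.2 /\ I.2 <= b /\ ~ (I.1 <= x <= I.2).
Proof. by rewrite /avoid_third; case: Rlt_dec => /=; lra. Qed.

Lemma avoiding_intervalsS f n :
  avoiding_intervals f n.+1 = avoid_third (f n) (avoiding_intervals f n).
Proof. by []. Qed.

Lemma avoiding_intervals_lt f n : (avoiding_intervals f n).1 < (avoiding_intervals f n).2.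
Proof.
elim: n => [|n IH]; first by rewrite /=; lra.
rewrite avoiding_intervalsS; move: IH; case: (avoiding_intervals f n) => a b ab.
by have [_ [? _]] := avoid_third_spec (f n) ab.
Qed.

Lemma avoiding_intervals_step f n :
  let I := avoiding_intervals f n in let J := avoiding_intervals f n.+1 in
  I.1 <= J.1 /\ J.1 < J.2 /\ J.2 <= I.2 /\ ~ (J.1 <= f n <= J.2).
Proof.
move=> I J; rewrite /I /J avoiding_intervalsS; have := avoiding_intervals_lt f n.
by case: (avoiding_intervals f n) => a b; exact: avoid_third_spec.
Qed.

Lemma avoiding_intervals_nested f m n :
  (avoiding_intervals f m).1 <= (avoiding_intervals f (m + n)).1 /\
  (avoiding_intervals f (m + n)).2 <= (avoiding_intervals f m).2.
Proof.
elim: n => [|n IH]; first by rewrite addn0; lra.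
by rewrite addnS; have [? [_ [? _]]] := avoiding_intervals_step f (m + n); lra.
Qed.

Lemma avoiding_intervals_fst_le_snd f m n :
  (avoiding_intervals f m).1 <= (avoiding_intervals f n).2.
Proof.
have [le_m _] := avoiding_intervals_nested f m n.
have [_ le_n] := avoiding_intervals_nested f n m.
by have := avoiding_intervals_lt f (m + n); rewrite addnC in le_n; lra.
Qed.

Lemma exists_real_not_in_seq (f : nat -> R) : exists x, forall n, f n <> x.
Proof.
pose E x := exists n, x = (avoiding_intervals f n).1.
have E_bound : bound E by exists 1 => _ [n ->]; exact: (avoiding_intervals_fst_le_snd f n 0).
have E_ne : exists x, E x by exists 0, 0%N.
have [x [ubx lubx]] := completeness E E_bound E_ne.
exists x => n fnx; have [_ [_ [_ []]]] := avoiding_intervals_step f n; rewrite fnx; split.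
- by apply: ubx; exists n.+1.
- by apply: lubx => _ [k ->]; exact: avoiding_intervals_fst_le_snd.
Qed.

Lemma exists_real_off_lattice_values d (u : Rd d) :
  exists r, forall p, is_lattice_point p -> dotR u p <> r.
Proof.
pose f n := if @unpickle {ffun 'I_d -> Z} n is Some z then dotR u (IZRv z) else 0.
have [r fr] := exists_real_not_in_seq f; exists r => p pZ upr.
have [z zE] := choice (fun i z => p i = IZR z) pZ.
apply: (fr (pickle [ffun i => z i])); rewrite /f pickleK -upr.
by apply: dotR_ext => i; rewrite /IZRv ffunE zE.
Qed.

Lemma lattice_covering_not_constant d (K : Rd d -> Prop) (t : R) (u : Rd d) x0 :
  K x0 -> lattice_covering t K -> (exists j, u j <> 0) ->
  ~ (forall x y, K x -> K y -> dotR u x = dotR u y).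
Proof.
move=> Kx0 cover [j uj] uconst; have [r offr] := exists_real_off_lattice_values u.
have [p [pZ [y [Ky pE]]]] := cover (fun i => if i == j then (r - t * dotR u x0) / u j else 0).
apply: (offr p pZ); rewrite (dotR_affine _ pE) dotR_delta (uconst y x0 Ky Kx0).
by field.
Qed.

Theorem lemma4p1 (d : nat) (K : Rd d -> Prop) (w F l : R) :
  convex_body K -> is_width K w -> 0 < w ->
  is_Flt d F -> is_lambda_d K l ->
  l <= F / w.
Proof.
move=> Kbody Kw w_gt0 Flt [lb_l _]; apply: Rnot_lt_le => lt_Fw_l.
have Fw_ge0 : 0 <= F / w.
  by apply: Rmult_le_pos; [exact: is_Flt_ge0 Flt | exact/Rlt_le/Rinv_0_lt_compat].
pose t := (F / w + l) / 2; pose t' := (t + l) / 2.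
have t_gt0 : 0 < t by rewrite /t; lra.
have Ftw : F < t * w.
  have FE : F / w * w = F by field; lra.
  by rewrite -{1}FE; apply: Rmult_lt_compat_r => //; rewrite /t; lra.
have cover := lattice_covering_of_width Kbody Kw Flt t_gt0 Ftw.
have tt'l : t < t' < l by rewrite /t' /t; lra.
suff span : full_lattice_span t' K.
  by have := lb_l t' (conj (Rlt_trans _ _ _ t_gt0 (proj1 tt'l)) span); lra.
apply: NNPP => nospan; have [[x0 Kx0] _] := Kbody.
have [u [u_nz ann]] : exists u : Rd d, (exists j, u j <> 0) /\
    forall z, in_scaled_diff t' K z /\ is_lattice_point z -> dotR u z = 0.
  by apply: exists_annihilator => -[v [vS vind]]; apply: nospan; exists v.
apply: (lattice_covering_not_constant Kx0 cover u_nz).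
apply: (constant_on_body_of_annihilator Kbody t_gt0 (proj1 tt'l) cover).
by move=> z Sz Zz; apply: ann.
Qed.
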